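(* The parameterized problems \textsc{Cluster Editing}[cvd] and \textsc{Cluster Editing}[ce] do not admit a boundaried kernelization (of any computable size $f$).
   Context: A boundaried graph $G_B$ is a finite simple graph $G$ together with a set $B\subseteq V(G)$ (the boundary). For boundaried graphs $G_B$ and $H_C$ with $V(G)\cap V(H)\subseteq B\cap C$, the gluing $G_B\oplus H_C$ is the simple graph obtained from the disjoint union of $G$ and $H$ by identifying each vertex of $B\cap C$ in $G$ with the identically named vertex in $H$ (an edge present in both is kept once). For an isomorphism-invariant optimization problem $\Pi$ on graphs with optimum value $\mathrm{OPT}_\Pi(G)$, two $B$-boundaried graphs $G_B,G'_B$ are gluing equivalent w.r.t. $\Pi$ and $B$, written $G_B\equiv_{\Pi,B}G'_B$, if there is $\Delta\in\mathbb{Z}$ with $\mathrm{OPT}_\Pi(G_B\oplus H_B)=\mathrm{OPT}_\Pi(G'_B\oplus H_B)+\Delta$ for every boundaried graph $H_B$. For a pure graph minimization problem $\rho$, a $\rho$-solution of $G$ is a feasible solution $s$ with value $\rho(G,s)$. For computable $f$, a boundaried kernelization of size $f$ for $\Pi[\rho]$ is a polynomial-time algorithm that, given a boundaried graph $G_B$ and a $\rho$-solution $s$ of $G$, outputs a boundaried graph $G'_B$ with $G_B\equiv_{\Pi,B}G'_B$, a $\rho$-solution $s'$ of $G'$ with $|G'|,|s'|,\rho(G',s')\le f(|B|+\rho(G,s))$ (encoding sizes), and an integer $\Delta$ with $\mathrm{OPT}_\Pi(G_B\oplus H_B)=\mathrm{OPT}_\Pi(G'_B\oplus H_B)+\Delta$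 for all $H_B$. A cluster graph is a disjoint union of cliques. \textsc{Cluster Editing} (ce) is the minimization problem whose feasible solutions on $G$ are sets $E$ of vertex pairs such that the graph with edge set $E(G)\triangle E$ is a cluster graph, with value $|E|$. \textsc{Cluster Vertex Deletion} (cvd) is the minimization problem whose feasible solutions are $S\subseteq V(G)$ with $G-S$ a cluster graph, value $|S|$. $\Pi$[cvd], $\Pi$[ce] denote $\rho=$ cvd, resp. $\rho=$ ce, with $\Pi=$ \textsc{Cluster Editing}. *)

From HB Require Import structures.
From mathcomp Require Import all_boot all_order all_algebra.
From mathcomp Require Import finmap.
Set Implicit Arguments. Unset Strict Implicit. Unset Printing Implicit Defensive.
Import GRing.Theory.
Local Open Scope fset_scope.

Record graph := Graph { vs : {fset nat}; adj : rel nat }.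

Definition wf_graph (G : graph) : Prop :=
  [/\ (forall u v, adj G u v -> (u \in vs G) && (v \in vs G)),
      (forall u v, adj G u v = adj G v u) &
      (forall u, ~~ adj G u u)].

Definition bgraph_wf (G : graph) (B : {fset nat}) : Prop :=
  wf_graph G /\ B `<=` vs G.

Definition is_cluster (V : {fset nat}) (e : rel nat) : Prop :=
  exists c : nat -> nat,
    forall x y, x \in V -> y \in V -> x != y -> e x y = (c x == c y).

Definition cvd_feasible (G : graph) (S : {fset nat}) : Prop :=
  S `<=` vs G /\ is_cluster (vs G `\` S) (adj G).
Definition cvd_value (G : graph) (S : {fset nat}) : nat := #|` S|.

(* Cluster Editing: a set of unordered vertex pairs, each stored as (u,v)
   with u < v; the edited graph has edge set E(G) symmetric-difference E. *)
Definition ce_feasible (G : graph) (E : {fset (nat * nat)}) : Prop :=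
  (forall p, p \in E -> [&& p.1 < p.2, p.1 \in vs G & p.2 \in vs G]) /\
  is_cluster (vs G) (fun x y => addb (adj G x y) ((minn x y, maxn x y) \in E)).
Definition ce_value (G : graph) (E : {fset (nat * nat)}) : nat := #|` E|.

Definition is_opt (S : Type) (feas : graph -> S -> Prop) (val : graph -> S -> nat)
  (G : graph) (k : nat) : Prop :=
  (exists s, feas G s /\ val G s = k) /\ (forall s, feas G s -> k <= val G s).

Definition opt_ce (G : graph) (k : nat) : Prop := is_opt ce_feasible ce_value G k.

(* Gluing G_B (+) H_C: disjoint union of G and H with the vertices of B :&: C
   identified.  To keep the union disjoint, vertex names are re-encoded:
   a shared vertex b becomes 3b, a private vertex v of G becomes 3v+1, a
   private vertex v of H becomes 3v+2. *)
Definition decode (tag : nat) (BC : {fset nat}) (x : nat) : option nat :=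
  if x %% 3 == 0 then (if x %/ 3 \in BC then Some (x %/ 3) else None)
  else if x %% 3 == tag then (if x %/ 3 \notin BC then Some (x %/ 3) else None)
  else None.

Definition lift_adj (e : rel nat) (tag : nat) (BC : {fset nat}) : rel nat :=
  fun x y => match decode tag BC x, decode tag BC y with
             | Some u, Some v => e u v
             | _, _ => false
             end.

Definition glue (G : graph) (B : {fset nat}) (H : graph) (C : {fset nat}) : graph :=
  let BC := B `&` C in
  Graph ([fset (3 * b)%N | b in BC]
           `|` [fset (3 * v + 1)%N | v in vs G `\` BC]
           `|` [fset (3 * v + 2)%N | v in vs H `\` BC])
        (fun x y => lift_adj (adj G) 1 BC x y || lift_adj (adj H) 2 BC x y).

(* Sizes: number of vertices of G' and value of s'
   (for both cvd and ce, |s'| equals rho(G', s')). *)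
Definition boundaried_kernelization (S : Type) (feas : graph -> S -> Prop)
  (val : graph -> S -> nat) (f : nat -> nat)
  (K : graph -> {fset nat} -> S -> graph * S * int) : Prop :=
  forall (G : graph) (B : {fset nat}) (s : S),
    bgraph_wf G B -> feas G s ->
    let G' := (K G B s).1.1 in
    let s' := (K G B s).1.2 in
    let D := (K G B s).2 in
    [/\ bgraph_wf G' B, feas G' s',
        #|` vs G'| <= f (addn #|` B| (val G s)),
        val G' s' <= f (addn #|` B| (val G s)) &
        forall H : graph, bgraph_wf H B ->
          forall k k', opt_ce (glue G B H B) k -> opt_ce (glue G' B H B) k' ->
            (Posz k = Posz k' + D)%R].

From mathcomp Require Import all_boot all_order all_algebra.
From mathcomp Require Import finmap zify.
From Stdlib Require Import Classical.
Set Implicit Arguments. Unset Strict Implicit. Unset Printing Implicit Defensive.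
Local Open Scope fset_scope.
Local Open Scope nat_scope.

(* Feed the kernel the clique K_n with boundary {0} and the empty solution, so
   the parameter is 1 and the kernel returns some G' with at most f(1) vertices,
   gluing equivalent to K_n with some offset D.  Gluing a single vertex leaves
   K_n a cluster graph, hence D <= 0.  Gluing a second copy of K_n through 0
   creates the n - 1 induced paths i - 0 - i', pairwise without common vertex
   pairs, so at least n - 1 edits are needed; on the other side, deleting the
   edges of G' not present in K_n costs at most |G'|^2 edits.  Thus
   n - 1 <= |G'|^2 <= f(1)^2, which fails for n = f(1)^2 + 2. *)

Local Notation upair x y := (minn x y, maxn x y).

Lemma decode_shared t BC u :
  decode t BC (3 * u) = if u \in BC then Some u else None.
Proof. by rewrite /decode modnMr mulKn. Qed.

Lemma decode_private t BC u : 0 < t < 3 ->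
  decode t BC (3 * u + t) = if u \notin BC then Some u else None.
Proof.
move=> ht; rewrite /decode.
have ->: (3 * u + t) %% 3 = t by lia.
have ->: (3 * u + t) %/ 3 = u by lia.
by rewrite eqxx; case: t ht.
Qed.

Lemma decode_other t t' BC u : 0 < t' < 3 -> t != t' ->
  decode t BC (3 * u + t') = None.
Proof.
move=> ht' ntt'; rewrite /decode.
have ->: (3 * u + t') %% 3 = t' by lia.
by case: t' ht' ntt' => //= t' _; rewrite eq_sym => /negbTE ->.
Qed.

Lemma decode_SomeP t BC x u : 0 < t < 3 -> decode t BC x = Some u ->
  (x = 3 * u /\ u \in BC) \/ (x = 3 * u + t /\ u \notin BC).
Proof.
move=> ht; rewrite /decode.
case: ifP => [/eqP x0|_]; first by case: ifP => // uBC [<-]; left; split => //; lia.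
by case: ifP => [/eqP xt|//]; case: ifP => // uBC [<-]; right; split => //; lia.
Qed.

Lemma decode_inj t BC x y u : 0 < t < 3 ->
  decode t BC x = Some u -> decode t BC y = Some u -> x = y.
Proof.
move=> ht /(decode_SomeP ht) hx /(decode_SomeP ht) hy.
case: hx hy => [[-> uBC]|[-> uBC]] [[-> uBC']|[-> uBC']] //.
- by move: uBC'; rewrite uBC.
- by move: uBC; rewrite uBC'.
Qed.

Lemma mem_glueP G B H x : x \in vs (glue G B H B) ->
  [\/ exists2 b, b \in B `&` B & x = 3 * b,
      exists2 v, v \in vs G `\` (B `&` B) & x = 3 * v + 1 |
      exists2 v, v \in vs H `\` (B `&` B) & x = 3 * v + 2].
Proof.
rewrite !in_fsetU => /orP[/orP[]|] /imfsetP[v hv ->].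
- by constructor 1; exists v.
- by constructor 2; exists v.
- by constructor 3; exists v.
Qed.

Lemma mem_glue_shared G B H b : b \in B `&` B -> 3 * b \in vs (glue G B H B).
Proof. by move=> hb; rewrite !in_fsetU in_imfset. Qed.

Lemma mem_glue_left G B H v :
  v \in vs G `\` (B `&` B) -> 3 * v + 1 \in vs (glue G B H B).
Proof. by move=> hv; rewrite !in_fsetU (in_imfset _ (fun v => 3 * v + 1)) ?orbT. Qed.

Lemma mem_glue_right G B H v :
  v \in vs H `\` (B `&` B) -> 3 * v + 2 \in vs (glue G B H B).
Proof. by move=> hv; rewrite !in_fsetU (in_imfset _ (fun v => 3 * v + 2)) ?orbT. Qed.

Lemma lift_adj_sym e t BC : symmetric e -> symmetric (lift_adj e t BC).
Proof.
by move=> sym x y; rewrite /lift_adj; case: (decode t BC x); case: (decode t BC y).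
Qed.

Lemma glue_adj_sym G B H : wf_graph G -> wf_graph H -> symmetric (adj (glue G B H B)).
Proof.
case=> _ symG _ [_ symH _] x y /=.
by rewrite (lift_adj_sym _ _ symG) (lift_adj_sym _ _ symH).
Qed.

Lemma leq_card_fsetM (T T' : choiceType) (A : {fset T}) (B : {fset T'}) :
  #|` A `*` B| <= #|` A| * #|` B|.
Proof.
rewrite /fsetM unlock /= size_seq_fset (leq_trans (size_undup _)) //.
by rewrite size_allpairs.
Qed.

Lemma is_opt_exists (S : Type) (feas : graph -> S -> Prop) (val : graph -> S -> nat) G :
  (exists s, feas G s) -> exists k, is_opt feas val G k.
Proof.
move=> [s0 hs0]; apply: NNPP => noopt.
suff noval k : forall s, feas G s -> val G s <> k by exact: noval _ s0 hs0 erefl.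
elim/ltn_ind: k => k IH s hs hsk; apply: noopt; exists k; split; first by exists s.
by move=> s' hs'; rewrite leqNgt; apply/negP => /IH /(_ s' hs'); apply.
Qed.

Definition edit_set (G : graph) (e : rel nat) : {fset nat * nat} :=
  [fset p in vs G `*` vs G | (p.1 < p.2) && (adj G p.1 p.2 != e p.1 p.2)].

Lemma mem_edit_set G e x y : ((x, y) \in edit_set G e) =
  [&& x \in vs G, y \in vs G, x < y & adj G x y != e x y].
Proof. by rewrite !inE /= !andbA. Qed.

Lemma sym_minn_maxn (r : rel nat) x y : symmetric r -> r (minn x y) (maxn x y) = r x y.
Proof. by move=> sym; case: leqP; rewrite // sym. Qed.

Lemma ce_feasible_edit_set G e : symmetric (adj G) -> symmetric e ->
  is_cluster (vs G) e -> ce_feasible G (edit_set G e).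
Proof.
move=> symG syme [c hc]; split.
  by case=> x y; rewrite mem_edit_set => /and4P[-> -> -> _].
exists c => x y hx hy nxy; rewrite -hc // mem_edit_set !sym_minn_maxn //.
have lt_min_max : minn x y < maxn x y by move: nxy; rewrite neq_ltn; case/orP => h; lia.
have [-> ->] : minn x y \in vs G /\ maxn x y \in vs G by case: (leqP x y).
by rewrite lt_min_max; case: (adj G x y); case: (e x y).
Qed.

Lemma ce_feasible_exists G : symmetric (adj G) -> exists E, ce_feasible G E.
Proof.
move=> symG; exists (edit_set G (fun _ _ => false)).
by apply: ce_feasible_edit_set => //; exists id => x y _ _ /negbTE.
Qed.

Lemma opt_ce_exists G : symmetric (adj G) -> exists k, opt_ce G k.
Proof. by move/ce_feasible_exists; apply: is_opt_exists. Qed.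

Lemma ce_feasible_fset0 G : is_cluster (vs G) (adj G) -> ce_feasible G fset0.
Proof. by case=> c hc; split=> //; exists c => x y hx hy nxy; rewrite in_fset0 addbF hc. Qed.

Lemma opt_ce_cluster G : is_cluster (vs G) (adj G) -> opt_ce G 0.
Proof. by move=> clG; split=> //; exists fset0; split; [exact: ce_feasible_fset0 | exact: cardfs0]. Qed.

Lemma ce_feasible_P3 G E x y z : ce_feasible G E ->
  x \in vs G -> y \in vs G -> z \in vs G -> x != y -> y != z -> x != z ->
  adj G x y -> adj G y z -> ~~ adj G x z ->
  [|| upair x y \in E, upair y z \in E | upair x z \in E].
Proof.
case=> _ [c hc] hx hy hz nxy nyz nxz axy ayz axz.
case exy: (upair x y \in E) => //; case eyz: (upair y z \in E) => //=.
case exz: (upair x z \in E) => //.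
move: (hc _ _ hx hy nxy) (hc _ _ hy hz nyz) (hc _ _ hx hz nxz).
by rewrite axy ayz (negbTE axz) exy eyz exz /= => /esym/eqP -> /esym/eqP ->; rewrite eqxx.
Qed.

Lemma is_cluster_glue_right G B H : B `<=` vs H -> is_cluster (vs H) (adj H) ->
  is_cluster (vs (glue G B H B)) (lift_adj (adj H) 2 (B `&` B)).
Proof.
move=> sBH [c hc].
have ht : 0 < 2 < 3 by [].
have decode_vs x u : x \in vs (glue G B H B) -> decode 2 (B `&` B) x = Some u -> u \in vs H.
  move=> hx /(decode_SomeP ht) [[_ uBC]|[ex uBC]].
    by apply: (fsubsetP sBH); move: uBC; rewrite in_fsetI => /andP[].
  case/mem_glueP: hx => -[v hv ev]; rewrite ex in ev; try lia.
  have -> : u = v by lia.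
  by move: hv; rewrite in_fsetD => /andP[].
exists (fun x => if decode 2 (B `&` B) x is Some u then 2 * c u else 2 * x + 1).
move=> x y hx hy nxy; rewrite /lift_adj.
case ex: (decode 2 _ x) => [u|]; case ey: (decode 2 _ y) => [v|].
- have nuv : u != v.
    by apply: contraNneq nxy => euv; apply/eqP/(decode_inj ht ex); rewrite euv.
  by rewrite hc ?eqn_pmul2l //; [exact: decode_vs ex | exact: decode_vs ey].
- by apply/esym/eqP; lia.
- by apply/esym/eqP; lia.
- by apply/esym/eqP => exy; move/eqP: nxy; apply; lia.
Qed.

Lemma ce_glue_cluster_upper G H B : wf_graph G -> wf_graph H -> B `<=` vs H ->
  is_cluster (vs H) (adj H) ->
  exists2 E, ce_feasible (glue G B H B) E & #|` E| <= #|` vs G| * #|` vs G|.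
Proof.
move=> wG wH sBH clH.
set BC := B `&` B; set lG := lift_adj (adj G) 1 BC; set lH := lift_adj (adj H) 2 BC.
have symG : symmetric lG by apply: lift_adj_sym; case: wG.
have symH : symmetric lH by apply: lift_adj_sym; case: wH.
exists (edit_set (glue G B H B) lH).
  apply: ce_feasible_edit_set => //; first exact: glue_adj_sym.
  exact: is_cluster_glue_right.
(* Only edges coming from G are edited, and G lives on the image W of V(G). *)
set W := [fset (if v \in BC then 3 * v else 3 * v + 1) | v in vs G].
have lG_W x y : lG x y -> x \in W.
  rewrite /lG /lift_adj; case ex: (decode 1 BC x) => [u|] //.
  case: (decode 1 BC y) => [v|] // huv.
  have hu : u \in vs G by case: wG => vsG _ _; case/andP: (vsG _ _ huv).
  apply/imfsetP; exists u => //.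
  by case: (decode_SomeP (isT : 0 < 1 < 3) ex) => -[-> uBC]; rewrite ?uBC ?(negbTE uBC).
have edit_W : edit_set (glue G B H B) lH `<=` W `*` W.
  apply/fsubsetP => -[x y]; rewrite mem_edit_set in_fsetM /= => /and4P[_ _ _].
  rewrite -/BC -/lG -/lH => hG; have {}hG : lG x y by case: (lG x y) (lH x y) hG => [] [].
  by rewrite (lG_W _ _ hG) (lG_W y x) // symG.
apply: leq_trans (fsubset_leq_card edit_W) _; apply: leq_trans (leq_card_fsetM W W) _.
by apply: leq_mul; apply: leq_imfset_card.
Qed.

Definition complete (n : nat) : graph :=
  Graph [fset x | x in iota 0 n] (fun x y => [&& x != y, x < n & y < n]).

Lemma mem_complete n x : (x \in vs (complete n)) = (x < n).
Proof. by rewrite in_fset /= mem_iota add0n. Qed.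

Lemma wf_complete n : wf_graph (complete n).
Proof.
split=> [u v|u v|u] /=; rewrite ?mem_complete ?eqxx //; first by case/and3P=> _ -> ->.
by rewrite eq_sym; case: (u < n); case: (v < n); rewrite ?andbF.
Qed.

Lemma bgraph_wf_complete n : 0 < n -> bgraph_wf (complete n) [fset 0].
Proof.
by split; [exact: wf_complete | apply/fsubsetP => x; rewrite in_fset1 mem_complete => /eqP ->].
Qed.

Lemma is_cluster_complete n : is_cluster (vs (complete n)) (adj (complete n)).
Proof. by exists (fun=> 0) => x y; rewrite !mem_complete /= => -> -> ->. Qed.

Lemma opt_ce_glue_complete_point n : 0 < n ->
  opt_ce (glue (complete n) [fset 0] (complete 1) [fset 0]) 0.
Proof.
move=> n_gt0; apply: opt_ce_cluster; exists (fun=> 0) => x y hx hy nxy.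
have ht : 0 < 1 < 3 by [].
have decode_lt z : z \in vs (glue (complete n) [fset 0] (complete 1) [fset 0]) ->
    exists2 u, decode 1 ([fset 0] `&` [fset 0]) z = Some u & u < n.
  case/mem_glueP => -[v]; rewrite ?in_fsetD fsetIid in_fset1 ?mem_complete.
  - by move=> /eqP -> ->; exists 0; rewrite ?decode_shared ?inE.
  - by move=> /andP[v0 vn] ->; exists v; rewrite ?decode_private ?inE ?v0.
  - by rewrite ltnS leqn0 => /andP[/negbTE ->].
have [u hu un] := decode_lt x hx; have [v hv vn] := decode_lt y hy.
have nuv : u != v.
  by apply: contraNneq nxy => euv; apply/eqP/(decode_inj ht hu); rewrite euv.
by rewrite /= /lift_adj hu hv un vn nuv.
Qed.

Lemma ce_glue_complete_lower n E :
  ce_feasible (glue (complete n) [fset 0] (complete n) [fset 0]) E -> n.-1 <= #|` E|.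
Proof.
move=> hE.
have hit i : 0 < i < n -> exists2 p, p \in E & p.2 %/ 3 = i.
  move=> /andP[i_gt0 i_lt_n].
  have iB : i \in vs (complete n) `\` ([fset 0] `&` [fset 0]).
    by rewrite in_fsetD fsetIid in_fset1 mem_complete -lt0n i_gt0.
  have iBC : i \notin [fset 0] `&` [fset 0] by move: iB; rewrite in_fsetD => /andP[].
  have zB : 0 \in [fset 0] `&` [fset 0] by rewrite fsetIid in_fset1.
  (* The two copies of i are joined only through the shared vertex 0. *)
  have := ce_feasible_P3 hE (mem_glue_left _ iB) (mem_glue_shared _ _ zB) (mem_glue_right _ iB).
  rewrite /= /lift_adj !decode_shared ?decode_private ?decode_other // zB (negPf iBC).
  case/(_ _ _ _ _ _ _)/or3P => /=; try lia;
    by move=> hp; eexists; [exact: hp | rewrite /=; lia].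
have sub : [fset i in iota 1 n.-1] `<=` [fset p.2 %/ 3 | p in E].
  apply/fsubsetP => i; rewrite in_fset /= mem_iota => /andP[i_gt0 i_lt].
  by have [p hp <-] := hit i ltac:(lia); apply/imfsetP; exists p.
have := fsubset_leq_card sub; rewrite card_fseq undup_id ?iota_uniq // size_iota.
by move/leq_trans; apply; apply: leq_imfset_card.
Qed.

Definition glue_equiv (G : graph) (B : {fset nat}) (G' : graph) (D : int) : Prop :=
  forall H, bgraph_wf H B -> forall k k',
    opt_ce (glue G B H B) k -> opt_ce (glue G' B H B) k' -> Posz k = (Posz k' + D)%R.

Lemma glue_equiv_complete_card n G' D : 0 < n -> bgraph_wf G' [fset 0] ->
  glue_equiv (complete n) [fset 0] G' D -> n.-1 <= #|` vs G'| * #|` vs G'|.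
Proof.
move=> n_gt0 [wG' _] equiv.
have [k1 opt1] : exists k, opt_ce (glue G' [fset 0] (complete 1) [fset 0]) k.
  by apply: opt_ce_exists; apply: glue_adj_sym => //; exact: wf_complete.
have offset_point :=
  equiv _ (bgraph_wf_complete (isT : 0 < 1)) _ _ (opt_ce_glue_complete_point n_gt0) opt1.
have [k2 opt2] : exists k, opt_ce (glue (complete n) [fset 0] (complete n) [fset 0]) k.
  by apply: opt_ce_exists; apply: glue_adj_sym; exact: wf_complete.
have [_ sB] := bgraph_wf_complete n_gt0.
have [E hE card_E] := ce_glue_cluster_upper wG' (wf_complete n) sB (is_cluster_complete n).
have [k2' opt2'] : exists k, opt_ce (glue G' [fset 0] (complete n) [fset 0]) k.
  by apply: is_opt_exists; exists E.
have offset_clique := equiv _ (bgraph_wf_complete n_gt0) _ _ opt2 opt2'.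
have lower : n.-1 <= k2 by case: opt2 => -[E2 [hE2 <-]] _; exact: ce_glue_complete_lower hE2.
have upper : k2' <= #|` E| by case: opt2' => _; apply.
lia.
Qed.

Lemma no_boundaried_kernelization (S : Type) (feas : graph -> S -> Prop)
    (val : graph -> S -> nat) :
  (forall n, exists2 s, feas (complete n) s & val (complete n) s = 0) ->
  ~ exists f K, boundaried_kernelization feas val f K.
Proof.
move=> sol [f [K kernel]].
pose n := (f 1 * f 1).+2.
have n_gt0 : 0 < n by [].
have [s hs s0] := sol n.
have [wfG' _ card_G' _ equiv] := kernel _ _ _ (bgraph_wf_complete n_gt0) hs.
rewrite cardfs1 s0 addn0 in card_G'.
have := glue_equiv_complete_card n_gt0 wfG' equiv.
have := leq_mul card_G' card_G'.
rewrite /n; lia.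
Qed.

Theorem mainTheorem10 :
  (~ exists (f : nat -> nat)
        (K : graph -> {fset nat} -> {fset nat} -> graph * {fset nat} * int),
        boundaried_kernelization cvd_feasible cvd_value f K) /\
  (~ exists (f : nat -> nat)
        (K : graph -> {fset nat} -> {fset (nat * nat)} -> graph * {fset (nat * nat)} * int),
        boundaried_kernelization ce_feasible ce_value f K).
Proof.
split; apply: no_boundaried_kernelization => n; exists fset0; rewrite ?cardfs0 //.
- by split; [exact: fsub0set | rewrite fsetD0; exact: is_cluster_complete].
- exact/ce_feasible_fset0/is_cluster_complete.
Qed.
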